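(* Let $\mathcal G$ be a synchronous game. There is $C>0$ depending only on $\mathcal G$ such that for every $0<\epsilon\le1$: if $\mathcal S=(\{E^i_a\},\{F^i_a\},|\psi\rangle)$ is an $\epsilon$-perfect quantum strategy for $\mathcal G$ and $\rho=\lambda^2$ is the reduced density matrix of $|\psi\rangle$ on Bob's factor, then $p^i_a\mapsto F^i_a$ is a $C\epsilon^{1/4}$-representation of the synchronous algebra $\mathcal A(\mathcal G)$ with respect to $\|\cdot\|_\rho$. If moreover $\mathcal S$ is a synchronous strategy, then $\|F^i_a\lambda-\lambda F^i_a\|_F\le C\epsilon^{1/2}$ for all $(i,a)$.
   Context: A game $\mathcal{G}=(\eta,I,J,A,B,V)$ has finite input sets, output sets, a distribution $\eta$ on $I\times J$ and predicate $V$. A synchronous game has $I=J$, $A=B$, $V(a,b|i,i)=0$ for $a\ne b$, and $\eta(i,j)>0$ for all $i,j$. A quantum strategy consists of a finite-dimensional Hilbert space $H$, PVMs $\{E^i_a\}_a$ (Alice) and $\{F^i_a\}_a$ (Bob) on $H$ and a unit vector $|\psi\rangle\in H\otimes H$, written $|\psi\rangle=\sum_t|t\rangle\otimes\lambda|t\rangle$ for an orthonormal basis $\{|t\rangle\}$ and positive semidefinite $\lambda$ with $\mathrm{tr}(\lambda^2)=1$ (so $\rho=\lambda^2$); $\overline X$ is entrywise conjugation in this basis. It is $\epsilon$-perfect if $\sum_{i,j}\eta(i,j)\sum_{a,b}V(a,b|i,j)\langle\psi|E^i_a\otimes F^j_b|\psi\rangle\ge1-\epsilon$, and synchronous if $E^i_a=\overline{F^i_a}$.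 Norms: $\|A\|_F=\mathrm{tr}(A^*A)^{1/2}$, $\|T\|_\rho=\|T\rho^{1/2}\|_F$. The synchronous algebra $\mathcal A(\mathcal G)$ is the finitely presented $*$-algebra with generators $p^i_a$ and relations $(p^i_a)^2=p^i_a=(p^i_a)^*$, $\sum_ap^i_a=1$ for each $i$, $p^i_ap^j_b=0$ whenever $V(a,b|i,j)=0$. An $\epsilon$-representation with respect to a seminorm $\|\cdot\|$ is an assignment of operators to generators (extended to a unital $*$-homomorphism of the free $*$-algebra) under which every defining relation $r$ (a relation $a=b$ meaning $r=a-b$) satisfies $\|\phi(r)\|\le\epsilon$. *)

From HB Require Import structures.
From mathcomp Require Import all_boot all_order all_algebra.
From mathcomp Require Import complex mxtens.
From mathcomp Require Import reals.
Set Implicit Arguments. Unset Strict Implicit. Unset Printing Implicit Defensive.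
Import Order.TTheory GRing.Theory Num.Theory.
Local Open Scope ring_scope.

Definition adjmx (C : numClosedFieldType) m n (X : 'M[C]_(m, n)) : 'M[C]_(n, m) :=
  (map_mx Num.conj X)^T.
Definition conjmx (C : numClosedFieldType) m n (X : 'M[C]_(m, n)) : 'M[C]_(m, n) :=
  map_mx Num.conj X.

Definition frob (C : numClosedFieldType) n (X : 'M[C]_n) : C :=
  sqrtC (\tr (adjmx X *m X)).

(* the rho-seminorm ||T||_rho = ||T rho^{1/2}||_F, with rho^{1/2} = lambda *)
Definition rho_norm (C : numClosedFieldType) n (lam : 'M[C]_n) (T : 'M[C]_n) : C :=
  frob (T *m lam).

Definition psd (C : numClosedFieldType) n (X : 'M[C]_n) : Prop :=
  adjmx X = X /\ forall x : 'cV[C]_n, 0 <= (adjmx x *m X *m x) 0 0.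

Definition is_PVM (C : numClosedFieldType) (A : finType) n (P : A -> 'M[C]_n) : Prop :=
  (forall a, P a *m P a = P a) /\ (forall a, adjmx (P a) = P a) /\
  \sum_a P a = 1%:M.

Definition synchronous_game (C : numClosedFieldType) (I A : finType)
    (eta : I -> I -> C) (V : A -> A -> I -> I -> bool) : Prop :=
  (forall i j, 0 < eta i j) /\ \sum_i \sum_j eta i j = 1 /\
  (forall i a b, a != b -> V a b i i = false).

Definition psi_of (C : numClosedFieldType) n (lam : 'M[C]_n) : 'M[C]_(n * n, 1 * 1) :=
  \sum_(t < n) (delta_mx t 0 : 'cV[C]_n) *t (lam *m (delta_mx t 0 : 'cV[C]_n)).

Definition corr (C : numClosedFieldType) n (lam : 'M[C]_n) (X Y : 'M[C]_n) : C :=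
  (adjmx (psi_of lam) *m (X *t Y) *m psi_of lam) 0 0.

Definition quantum_strategy (C : numClosedFieldType) (I A : finType) n
    (E F : I -> A -> 'M[C]_n) (lam : 'M[C]_n) : Prop :=
  (forall i, is_PVM (E i)) /\ (forall i, is_PVM (F i)) /\
  psd lam /\ \tr (lam *m lam) = 1.

Definition win_prob (C : numClosedFieldType) (I A : finType)
    (eta : I -> I -> C) (V : A -> A -> I -> I -> bool) n
    (E F : I -> A -> 'M[C]_n) (lam : 'M[C]_n) : C :=
  \sum_i \sum_j eta i j * \sum_a \sum_b (V a b i j)%:R * corr lam (E i a) (F j b).

Definition eps_perfect (C : numClosedFieldType) (I A : finType)
    (eta : I -> I -> C) (V : A -> A -> I -> I -> bool) n
    (E F : I -> A -> 'M[C]_n) (lam : 'M[C]_n) (eps : C) : Prop :=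
  1 - eps <= win_prob eta V E F lam.

Definition sync_strategy (C : numClosedFieldType) (I A : finType) n
    (E F : I -> A -> 'M[C]_n) : Prop :=
  forall i a, E i a = conjmx (F i a).

Definition eps_representation (C : numClosedFieldType) (I A : finType)
    (V : A -> A -> I -> I -> bool) n (nrm : 'M[C]_n -> C)
    (P : I -> A -> 'M[C]_n) (eps : C) : Prop :=
  (forall i a, nrm (P i a *m P i a - P i a) <= eps) /\
  (forall i a, nrm (P i a - adjmx (P i a)) <= eps) /\
  (forall i, nrm (\sum_a P i a - 1%:M) <= eps) /\
  (forall i j a b, V a b i j = false -> nrm (P i a *m P j b) <= eps).

From HB Require Import structures.
From mathcomp Require Import all_boot all_order all_algebra.
From mathcomp Require Import complex mxtens.
From mathcomp Require Import reals.
From mathcomp Require Import ring.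
Import Order.TTheory GRing.Theory Num.Theory.
Local Open Scope ring_scope.
Set Implicit Arguments. Unset Strict Implicit. Unset Printing Implicit Defensive.

(* Write [Et^i_a] for the transpose of [E^i_a], so that
   [<psi| E^i_a (x) F^j_b |psi> = tr (Et^i_a lam F^j_b lam) = ||Et^i_a lam F^j_b||_F^2].
   Near-perfection forces this probability to be [O(eps)] whenever
   [V(a,b|i,j) = 0].  Since [V(a,b|i,i) = 0] for [a != b], the defect
   [Et^i_a lam - lam F^i_a = sum_b (Et^i_a lam F^i_b - Et^i_b lam F^i_a)]
   then has Frobenius norm [O(sqrt eps)]; for a synchronous strategy
   [Et^i_a = F^i_a] and this is the commutator bound.  The projection
   relations of [A(G)] hold exactly for PVMs, and for [V(a,b|i,j) = 0] moving
   projections across [lam] at the cost of defects gives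
   [||F^i_a F^j_b lam||_F^2 = <psi| E^i_a (x) F^j_b |psi> + O(sqrt eps)]. *)

Section Adjoint.
Variable C : numClosedFieldType.

Lemma adjmxM m n p (X : 'M[C]_(m, n)) (Y : 'M[C]_(n, p)) :
  adjmx (X *m Y) = adjmx Y *m adjmx X.
Proof. by rewrite /adjmx map_mxM trmx_mul. Qed.

Lemma adjmxK m n (X : 'M[C]_(m, n)) : adjmx (adjmx X) = X.
Proof. by apply/matrixP=> i j; rewrite !mxE conjCK. Qed.

Lemma adjmxD m n (X Y : 'M[C]_(m, n)) : adjmx (X + Y) = adjmx X + adjmx Y.
Proof. by apply/matrixP=> i j; rewrite !mxE rmorphD. Qed.

Lemma adjmxN m n (X : 'M[C]_(m, n)) : adjmx (- X) = - adjmx X.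
Proof. by apply/matrixP=> i j; rewrite !mxE rmorphN. Qed.

Lemma adjmxB m n (X Y : 'M[C]_(m, n)) : adjmx (X - Y) = adjmx X - adjmx Y.
Proof. by rewrite adjmxD adjmxN. Qed.

Lemma adjmxZ m n a (X : 'M[C]_(m, n)) : adjmx (a *: X) = a^* *: adjmx X.
Proof. by apply/matrixP=> i j; rewrite !mxE rmorphM. Qed.

Lemma adjmx_sum m n (I : finType) (F : I -> 'M[C]_(m, n)) :
  adjmx (\sum_i F i) = \sum_i adjmx (F i).
Proof.
apply/matrixP=> i j; rewrite !mxE !summxE rmorph_sum.
by apply: eq_bigr=> k _; rewrite !mxE.
Qed.

Lemma adjmx_tr m n (X : 'M[C]_(m, n)) : adjmx X^T = (adjmx X)^T.
Proof. by apply/matrixP=> i j; rewrite !mxE. Qed.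

Lemma adjmx_tens m n p q (X : 'M[C]_(m, n)) (Y : 'M[C]_(p, q)) :
  adjmx (X *t Y) = adjmx X *t adjmx Y.
Proof. by rewrite /adjmx map_mxT trmx_tens. Qed.

Lemma adjmx_delta m n (i : 'I_m) (j : 'I_n) :
  adjmx (delta_mx i j : 'M[C]_(m, n)) = delta_mx j i.
Proof. by apply/matrixP=> a b; rewrite !mxE rmorph_nat andbC. Qed.

Lemma mxtrace_adj n (X : 'M[C]_n) : \tr (adjmx X) = (\tr X)^*.
Proof.
rewrite /adjmx mxtrace_tr /mxtrace rmorph_sum.
by apply: eq_bigr=> i _; rewrite mxE.
Qed.

End Adjoint.

Section FrobeniusInnerProduct.
Variables (C : numClosedFieldType) (n : nat).
Implicit Types (X Y Z P : 'M[C]_n) (a : C).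

Definition frobdot X Y := \tr (adjmx X *m Y).

Lemma frobdotC X Y : (frobdot X Y)^* = frobdot Y X.
Proof. by rewrite /frobdot -mxtrace_adj adjmxM adjmxK. Qed.

Lemma frobdot_ge0 X : 0 <= frobdot X X.
Proof.
rewrite /frobdot /mxtrace; apply: sumr_ge0=> i _; rewrite mxE.
by apply: sumr_ge0=> j _; rewrite !mxE mulrC mul_conjC_ge0.
Qed.

Lemma frobdot_real X : (frobdot X X)^* = frobdot X X.
Proof. exact: geC0_conj (frobdot_ge0 X). Qed.

Lemma frobdot0 : frobdot (0 : 'M[C]_n) 0 = 0.
Proof. by rewrite /frobdot mulmx0 mxtrace0. Qed.

Lemma frobdotDl X Y Z : frobdot (X + Y) Z = frobdot X Z + frobdot Y Z.
Proof. by rewrite /frobdot adjmxD mulmxDl mxtraceD. Qed.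

Lemma frobdotDr X Y Z : frobdot Z (X + Y) = frobdot Z X + frobdot Z Y.
Proof. by rewrite /frobdot mulmxDr mxtraceD. Qed.

Lemma frobdotNl X Z : frobdot (- X) Z = - frobdot X Z.
Proof. by rewrite /frobdot adjmxN mulNmx raddfN. Qed.

Lemma frobdotNr X Z : frobdot Z (- X) = - frobdot Z X.
Proof. by rewrite /frobdot mulmxN raddfN. Qed.

Lemma frobdotBl X Y Z : frobdot (X - Y) Z = frobdot X Z - frobdot Y Z.
Proof. by rewrite frobdotDl frobdotNl. Qed.

Lemma frobdotBr X Y Z : frobdot Z (X - Y) = frobdot Z X - frobdot Z Y.
Proof. by rewrite frobdotDr frobdotNr. Qed.

Lemma frobdotZl a X Z : frobdot (a *: X) Z = a^* * frobdot X Z.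
Proof. by rewrite /frobdot adjmxZ -scalemxAl mxtraceZ. Qed.

Lemma frobdotZr a X Z : frobdot Z (a *: X) = a * frobdot Z X.
Proof. by rewrite /frobdot -scalemxAr mxtraceZ. Qed.

Lemma frobdotNN X : frobdot (- X) (- X) = frobdot X X.
Proof. by rewrite frobdotNl frobdotNr opprK. Qed.

Lemma frobdot_adj X : frobdot (adjmx X) (adjmx X) = frobdot X X.
Proof. by rewrite /frobdot adjmxK mxtrace_mulC. Qed.

Lemma frobdot_herml P X Y : adjmx P = P -> frobdot (P *m X) Y = frobdot X (P *m Y).
Proof. by move=> hP; rewrite /frobdot adjmxM hP mulmxA. Qed.

Lemma frobdot_projl_le P X : P *m P = P -> adjmx P = P ->
  frobdot (P *m X) (P *m X) <= frobdot X X.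
Proof.
move=> hPP hP.
have e1 : frobdot (P *m X) (P *m X) = frobdot X (P *m X).
  by rewrite frobdot_herml // mulmxA hPP.
have e2 : frobdot (P *m X) X = frobdot X (P *m X) by rewrite frobdot_herml.
have := frobdot_ge0 (X - P *m X).
rewrite frobdotBl !frobdotBr e1 e2 => h.
by rewrite -subr_ge0; move: h; congr (_ <= _); ring.
Qed.

Lemma frobdotB_le X Y :
  frobdot (X - Y) (X - Y) <= 2 * frobdot X X + 2 * frobdot Y Y.
Proof.
have := frobdot_ge0 (X + Y).
rewrite frobdotBl !frobdotBr frobdotDl !frobdotDr => h.
by rewrite -subr_ge0; move: h; congr (_ <= _); ring.
Qed.

Lemma frobdot_sum_le (T : Type) (r : seq T) (M : T -> 'M[C]_n) (c : C) :
  0 <= c -> (forall b, frobdot (M b) (M b) <= c) ->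
  frobdot (\sum_(b <- r) M b) (\sum_(b <- r) M b) <= 4 ^+ size r * c.
Proof.
move=> c0 hM; elim: r => [|x r IH]; first by rewrite big_nil frobdot0 mul1r.
rewrite big_cons.
have := frobdotB_le (M x) (- \sum_(b <- r) M b).
rewrite opprK frobdotNN => /le_trans; apply.
have Mx : frobdot (M x) (M x) <= 4 ^+ size r * c.
  by apply: le_trans (hM x) _; rewrite ler_peMl // exprn_ege1 // ler1n.
apply: le_trans (lerD (ler_wpM2l _ Mx) (ler_wpM2l _ IH)) _; rewrite ?ler0n //.
by rewrite /= exprS le_eqVlt; apply/orP; left; apply/eqP; ring.
Qed.

(* Real-part Cauchy-Schwarz in AM-GM form, from [0 <= ||X - s Y||_F^2]. *)
Lemma frobdot_cross_le (s : C) X Y : s^* = s ->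
  s * (frobdot X Y + frobdot Y X) <= frobdot X X + s ^+ 2 * frobdot Y Y.
Proof.
move=> sr; have := frobdot_ge0 (X - s *: Y).
rewrite frobdotBl !frobdotBr !frobdotZl !frobdotZr sr => h.
by rewrite -subr_ge0; move: h; congr (_ <= _); ring.
Qed.

Lemma frobdot_cross_small (t k : C) X Y : 0 < t -> 0 <= k ->
  frobdot X X <= k * t ^+ 2 -> frobdot Y Y <= 1 ->
  frobdot X Y + frobdot Y X <= (k + 1) * t /\
  - (frobdot X Y + frobdot Y X) <= (k + 1) * t.
Proof.
move=> t0 k0 hX hY.
have tr : t^* = t by apply: geC0_conj; exact: ltW.
have bound s : s^* = s -> s ^+ 2 = t ^+ 2 ->
    s * (frobdot X Y + frobdot Y X) <= (k + 1) * t * t.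
  move=> sr s2; apply: le_trans (frobdot_cross_le X Y sr) _; rewrite s2.
  have : frobdot X X + t ^+ 2 * frobdot Y Y <= k * t ^+ 2 + t ^+ 2 * 1.
    by apply: lerD => //; apply: ler_wpM2l => //; rewrite exprn_ge0 // ltW.
  by move/le_trans; apply; rewrite le_eqVlt; apply/orP; left; apply/eqP; ring.
split; first by have := bound t tr erefl; rewrite [t * _]mulrC ler_pM2r.
have := bound (- t); rewrite rmorphN /= tr sqrrN => /(_ erefl erefl).
by rewrite mulNr -mulrN mulrC ler_pM2r.
Qed.

End FrobeniusInnerProduct.

Section Correlation.
Variable C : numClosedFieldType.

Lemma tens_scalar_entry (X Y : 'M[C]_(1, 1)) : (X *t Y) 0 0 = X 0 0 * Y 0 0.
Proof.
by rewrite mxE; case: (mxtens_unindex _) => a b /=; rewrite [a]ord1 [b]ord1.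
Qed.

Lemma delta_mul_delta n (M : 'M[C]_n) (s t : 'I_n) :
  ((delta_mx 0 s : 'M[C]_(1, n)) *m M *m (delta_mx t 0 : 'M[C]_(n, 1))) 0 0 = M s t.
Proof. by rewrite -rowE -colE !mxE. Qed.

Lemma mxtrace_trmx_mul n (X M : 'M[C]_n) :
  \tr (X^T *m M) = \sum_s \sum_t X s t * M s t.
Proof.
rewrite /mxtrace exchange_big /=.
rewrite (eq_bigr (fun i => \sum_j X j i * M j i)); last first.
  by move=> i _; rewrite mxE; apply: eq_bigr=> j _; rewrite mxE.
by rewrite exchange_big.
Qed.

Lemma corrE n (lam X Y : 'M[C]_n) :
  corr lam X Y = \tr (X^T *m (adjmx lam *m Y *m lam)).
Proof.
rewrite /corr /psi_of adjmx_sum mulmx_suml mulmx_suml summxE.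
rewrite mxtrace_trmx_mul; apply: eq_bigr => s _.
rewrite mulmx_sumr summxE; apply: eq_bigr => t _.
rewrite adjmx_tens !tensmx_mul tens_scalar_entry adjmxM !adjmx_delta.
by rewrite delta_mul_delta -(delta_mul_delta (adjmx lam *m Y *m lam)) !mulmxA.
Qed.

End Correlation.

Section Strategy.
Variables (C : numClosedFieldType) (I A : finType) (n : nat).
Variables (E F : I -> A -> 'M[C]_n) (lam : 'M[C]_n).
Hypothesis hE : forall i, is_PVM (E i).
Hypothesis hF : forall i, is_PVM (F i).
Hypothesis hlam : adjmx lam = lam.
Hypothesis htr : \tr (lam *m lam) = 1.

Definition Et i a := (E i a)^T.

Lemma Et_idem i a : Et i a *m Et i a = Et i a.
Proof. by rewrite /Et -trmx_mul; case: (hE i) => ->. Qed.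

Lemma Et_herm i a : adjmx (Et i a) = Et i a.
Proof. by rewrite /Et adjmx_tr; case: (hE i) => _ [-> _]. Qed.

Lemma Et_sum i : \sum_a Et i a = 1%:M.
Proof.
case: (hE i) => _ [_ hs]; rewrite /Et -trmx1 -hs.
by apply/matrixP=> x y; rewrite !(mxE, summxE); apply: eq_bigr=> k _; rewrite mxE.
Qed.

Lemma F_idem i a : F i a *m F i a = F i a.
Proof. by case: (hF i) => ->. Qed.

Lemma F_herm i a : adjmx (F i a) = F i a.
Proof. by case: (hF i) => _ [-> _]. Qed.

Lemma F_sum i : \sum_a F i a = 1%:M.
Proof. by case: (hF i) => _ [_ ->]. Qed.

Lemma mulmx_F_idem (X : 'M[C]_n) i a : X *m F i a *m F i a = X *m F i a.
Proof. by rewrite -mulmxA F_idem. Qed.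

Definition prob i j a b := \tr (Et i a *m lam *m F j b *m lam).

Lemma corr_prob i j a b : corr lam (E i a) (F j b) = prob i j a b.
Proof. by rewrite corrE hlam /prob !mulmxA. Qed.

Lemma prob_frobdot i j a b :
  prob i j a b = frobdot (Et i a *m lam *m F j b) (Et i a *m lam *m F j b).
Proof.
rewrite /frobdot !adjmxM F_herm Et_herm hlam.
rewrite !mulmxA -[F j b *m lam *m Et i a *m Et i a]mulmxA Et_idem.
rewrite mxtrace_mulC !mulmxA F_idem.
by rewrite -!mulmxA mxtrace_mulC !mulmxA /prob -!mulmxA mxtrace_mulC !mulmxA.
Qed.

Lemma prob_ge0 i j a b : 0 <= prob i j a b.
Proof. by rewrite prob_frobdot frobdot_ge0. Qed.

Lemma prob_sum i j : \sum_a \sum_b prob i j a b = 1.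
Proof.
rewrite -htr /prob.
have -> : lam *m lam = (\sum_a Et i a) *m lam *m (\sum_b F j b) *m lam.
  by rewrite Et_sum F_sum mul1mx mulmx1.
rewrite !mulmx_suml raddf_sum; apply: eq_bigr => a _.
by rewrite mulmx_sumr mulmx_suml raddf_sum.
Qed.

Lemma frobdot_Flam_le1 j b : frobdot (F j b *m lam) (F j b *m lam) <= 1.
Proof.
have <- : frobdot lam lam = 1 by rewrite /frobdot hlam.
by apply: frobdot_projl_le; [apply: F_idem | apply: F_herm].
Qed.

Lemma frobdot_FFlam_le1 i j a b :
  frobdot (F i a *m F j b *m lam) (F i a *m F j b *m lam) <= 1.
Proof.
rewrite -mulmxA; apply: le_trans (frobdot_Flam_le1 j b).
by apply: frobdot_projl_le; [apply: F_idem | apply: F_herm].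
Qed.

Definition defect i a := Et i a *m lam - lam *m F i a.

Lemma defect_sum i a :
  defect i a = \sum_b (Et i a *m lam *m F i b - Et i b *m lam *m F i a).
Proof.
rewrite sumrB -mulmx_sumr F_sum mulmx1.
rewrite (eq_bigr (fun b => Et i b *m (lam *m F i a))); last by move=> b _; rewrite mulmxA.
by rewrite -mulmx_suml Et_sum mul1mx.
Qed.

Lemma frobdot_defect_adj i a :
  frobdot (F i a *m lam - lam *m Et i a) (F i a *m lam - lam *m Et i a) =
  frobdot (defect i a) (defect i a).
Proof.
have -> : F i a *m lam - lam *m Et i a = - adjmx (defect i a).
  by rewrite /defect adjmxB !adjmxM Et_herm F_herm hlam opprB.
by rewrite frobdotNN frobdot_adj.
Qed.

(* Move [F^j_b] and then [F^i_a] across [lam], each time at the cost of a defect. *)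
Lemma frobdot_FFlam i j a b :
  let X := F i a *m F j b *m lam in
  let Db := F j b *m lam - lam *m Et j b in
  let Da := F i a *m lam - lam *m Et i a in
  let Y := F j b *m F i a *m lam in
  let W := F j b *m lam in
  frobdot X X = prob i j a b + frobdot Db X - frobdot Y Db + frobdot Da W.
Proof.
move=> X Db Da Y W.
have cyc : \tr (Et j b *m lam *m F i a *m F j b *m lam) =
           \tr (lam *m F i a *m F j b *m lam *m Et j b).
  by rewrite -!mulmxA mxtrace_mulC !mulmxA.
rewrite /X /Db /Da /Y /W /frobdot /prob.
rewrite !(adjmxM, adjmxB) !F_herm !Et_herm hlam.
rewrite !(mulmxBl, mulmxBr) !raddfB /= !mulmxA.
by rewrite !mulmx_F_idem cyc; ring.
Qed.

Lemma frobdot_FFlam_real i j a b :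
  let X := F i a *m F j b *m lam in
  let Db := F j b *m lam - lam *m Et j b in
  let Da := F i a *m lam - lam *m Et i a in
  let Y := F j b *m F i a *m lam in
  let W := F j b *m lam in
  2 * frobdot X X = 2 * prob i j a b + (frobdot Db X + frobdot X Db)
    - (frobdot Db Y + frobdot Y Db) + (frobdot Da W + frobdot W Da).
Proof.
move=> X Db Da Y W.
have /= := frobdot_FFlam i j a b; rewrite -/X -/Db -/Da -/Y -/W => expand.
have expand' : frobdot X X = prob i j a b + frobdot X Db - frobdot Db Y + frobdot W Da.
  rewrite -[LHS]frobdot_real expand !rmorphD !rmorphN /= !frobdotC.
  by rewrite prob_frobdot frobdot_real -prob_frobdot.
transitivity (frobdot X X + frobdot X X); first by ring.
by rewrite {1}expand expand'; ring.
Qed.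

End Strategy.

Lemma ler_sum2_term (C : numDomainType) (T1 T2 : finType) (f : T1 -> T2 -> C) x y :
  (forall x y, 0 <= f x y) -> f x y <= \sum_x \sum_y f x y.
Proof.
move=> f_ge0; rewrite (bigD1 x) //= (bigD1 y) //= -addrA lerDl.
by rewrite addr_ge0 ?sumr_ge0 // => x' _; rewrite sumr_ge0.
Qed.

Section GameConstants.
Variables (C : numClosedFieldType) (I A : finType).
Variables (eta : I -> I -> C) (V : A -> A -> I -> I -> bool).
Hypothesis game : synchronous_game eta V.

Definition eta_inv_sum := \sum_i \sum_j (eta i j)^-1.
Definition defect_const := 4 ^+ #|A| * (4 * eta_inv_sum).
Definition orth_const := eta_inv_sum + 2 * (defect_const + 1).
Definition game_const := sqrtC defect_const + sqrtC orth_const.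

Lemma eta_gt0 i j : 0 < eta i j.
Proof. by case: game. Qed.

Lemma eta_inv_ge0 i j : 0 <= (eta i j)^-1.
Proof. by rewrite invr_ge0 ltW // eta_gt0. Qed.

Lemma eta_inv_sum_ge0 : 0 <= eta_inv_sum.
Proof. by apply: sumr_ge0=> i _; apply: sumr_ge0=> j _; apply: eta_inv_ge0. Qed.

Lemma eta_inv_le_sum i j : (eta i j)^-1 <= eta_inv_sum.
Proof. exact: (ler_sum2_term _ _ eta_inv_ge0). Qed.

Lemma defect_const_ge0 : 0 <= defect_const.
Proof. by rewrite mulr_ge0 ?exprn_ge0 ?mulr_ge0 ?eta_inv_sum_ge0. Qed.

Lemma orth_const_gt0 : 0 < orth_const.
Proof.
by rewrite ltr_wpDl ?eta_inv_sum_ge0 // mulr_gt0 // ltr_wpDl ?defect_const_ge0.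
Qed.

Lemma game_const_gt0 : 0 < game_const.
Proof.
by rewrite ltr_wpDl ?sqrtC_ge0 ?defect_const_ge0 // sqrtC_gt0 orth_const_gt0.
Qed.

End GameConstants.

Section NearlyPerfect.
Variables (C : numClosedFieldType) (I A : finType).
Variables (eta : I -> I -> C) (V : A -> A -> I -> I -> bool).
Hypothesis game : synchronous_game eta V.
Variables (n : nat) (E F : I -> A -> 'M[C]_n) (lam : 'M[C]_n).
Hypothesis hE : forall i, is_PVM (E i).
Hypothesis hF : forall i, is_PVM (F i).
Hypothesis hlam : adjmx lam = lam.
Hypothesis htr : \tr (lam *m lam) = 1.
Variable eps : C.
Hypothesis eps_gt0 : 0 < eps.
Hypothesis eps_le1 : eps <= 1.
Hypothesis perfect : eps_perfect eta V E F lam eps.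

Local Notation prob := (prob E F lam).
Local Notation defect := (defect E F lam).
Local Notation Et := (Et E).

Definition lose_prob i j := \sum_a \sum_b (1 - (V a b i j)%:R) * prob i j a b.

Lemma lose_prob_term_ge0 i j a b : 0 <= (1 - (V a b i j)%:R) * prob i j a b.
Proof. by rewrite mulr_ge0 ?prob_ge0 //; case: (V a b i j); rewrite ?subrr ?subr0. Qed.

Lemma lose_prob_sum :
  \sum_i \sum_j eta i j * lose_prob i j = 1 - win_prob eta V E F lam.
Proof.
have lose_prob_E i j : lose_prob i j =
    1 - \sum_a \sum_b (V a b i j)%:R * corr lam (E i a) (F j b).
  rewrite -[X in _ = X - _](prob_sum hE hF htr i j) -sumrB; apply: eq_bigr=> a _.
  rewrite -sumrB; apply: eq_bigr=> b _.
  by rewrite corr_prob // mulrBl mul1r.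
case: game => _ [eta_sum _].
rewrite /win_prob -[X in _ = X - _]eta_sum -sumrB; apply: eq_bigr=> i _.
by rewrite -sumrB; apply: eq_bigr=> j _; rewrite lose_prob_E mulrBr mulr1.
Qed.

Lemma prob_forbidden_le i j a b :
  V a b i j = false -> prob i j a b <= eps * eta_inv_sum eta.
Proof.
move=> hV.
have eta_lose_le : eta i j * lose_prob i j <= eps.
  apply: le_trans (_ : _ <= 1 - win_prob eta V E F lam) _.
    rewrite -lose_prob_sum; apply: (ler_sum2_term (f := fun x y => _)) => x y.
    rewrite mulr_ge0 ?(ltW (eta_gt0 game x y)) //.
    by apply: sumr_ge0=> a' _; apply: sumr_ge0=> b' _; apply: lose_prob_term_ge0.
  by rewrite lerBlDl -lerBlDr.
have prob_le_lose : prob i j a b <= lose_prob i j.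
  have := ler_sum2_term (f := fun a b => (1 - (V a b i j)%:R) * prob i j a b) a b.
  by rewrite hV subr0 mul1r; apply=> a' b'; apply: lose_prob_term_ge0.
apply: le_trans prob_le_lose _.
apply: le_trans (_ : _ <= (eta i j)^-1 * eps) _.
  by rewrite ler_pdivlMl ?(eta_gt0 game).
by rewrite mulrC ler_wpM2l ?(ltW eps_gt0) ?(eta_inv_le_sum game).
Qed.

Lemma defect_le i a :
  frobdot (defect i a) (defect i a) <= defect_const A eta * eps.
Proof.
have c0 : 0 <= 4 * (eps * eta_inv_sum eta).
  by rewrite !mulr_ge0 ?(eta_inv_sum_ge0 game) ?(ltW eps_gt0).
have term_le b : frobdot (Et i a *m lam *m F i b - Et i b *m lam *m F i a)
    (Et i a *m lam *m F i b - Et i b *m lam *m F i a) <= 4 * (eps * eta_inv_sum eta).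
  have [-> | nba] := eqVneq b a; first by rewrite subrr frobdot0.
  apply: le_trans (frobdotB_le _ _) _; rewrite -!(prob_frobdot hE hF hlam).
  have [_ [_ sync]] := game.
  have nab : a != b by rewrite eq_sym.
  have ab := prob_forbidden_le (sync i a b nab).
  have ba := prob_forbidden_le (sync i b a nba).
  apply: le_trans (lerD (ler_wpM2l _ ab) (ler_wpM2l _ ba)) _; rewrite ?ler0n //.
  by rewrite le_eqVlt; apply/orP; left; apply/eqP; ring.
rewrite defect_sum //; apply: le_trans (frobdot_sum_le _ c0 term_le) _.
by rewrite /defect_const cardT enumT le_eqVlt; apply/orP; left; apply/eqP; ring.
Qed.

Lemma sync_commutator_le : sync_strategy E F ->
  forall i a, frob (F i a *m lam - lam *m F i a) <= game_const A eta * sqrtC eps.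
Proof.
move=> sync i a.
have Et_F : Et i a = F i a by rewrite /Et sync; exact: (F_herm hF i a).
have K1eps0 : 0 <= defect_const A eta * eps.
  by rewrite mulr_ge0 ?(defect_const_ge0 game) ?(ltW eps_gt0).
have -> : F i a *m lam - lam *m F i a = defect i a by rewrite /defect Et_F.
apply: le_trans (_ : _ <= sqrtC (defect_const A eta * eps)) _.
  by rewrite /frob ler_sqrtC ?nnegrE ?frobdot_ge0 // defect_le.
rewrite sqrtCM ?nnegrE ?(defect_const_ge0 game) ?(ltW eps_gt0) //.
rewrite ler_wpM2r ?sqrtC_ge0 ?(ltW eps_gt0) // lerDl sqrtC_ge0.
exact: ltW (orth_const_gt0 game).
Qed.

Lemma frobdot_FFlam_forbidden_le i j a b : V a b i j = false ->
  frobdot (F i a *m F j b *m lam) (F i a *m F j b *m lam) <=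
  orth_const A eta * sqrtC eps.
Proof.
move=> hV; set t := sqrtC eps.
have t_gt0 : 0 < t by rewrite sqrtC_gt0.
have eps_le_t : eps <= t.
  have t_le1 : t <= 1 by rewrite -sqrtC1 ler_sqrtC ?nnegrE ?ler01 ?(ltW eps_gt0).
  by rewrite -(sqrtCK eps) -/t expr2 ler_piMr ?(ltW t_gt0).
have K1_ge0 := defect_const_ge0 game.
have defect_adj_le k c : frobdot (F k c *m lam - lam *m Et k c)
    (F k c *m lam - lam *m Et k c) <= defect_const A eta * t ^+ 2.
  by rewrite frobdot_defect_adj // sqrtCK defect_le.
have cross_b := frobdot_cross_small t_gt0 K1_ge0 (defect_adj_le j b).
have [Xb _] := cross_b _ (frobdot_FFlam_le1 hF hlam htr i j a b).
have [_ Yb] := cross_b _ (frobdot_FFlam_le1 hF hlam htr j i b a).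
have [Wa _] := frobdot_cross_small t_gt0 K1_ge0 (defect_adj_le i a)
  (frobdot_Flam_le1 hF hlam htr j b).
have probb : 2 * prob i j a b <= 2 * (t * eta_inv_sum eta).
  rewrite ler_wpM2l ?ler0n //; apply: le_trans (prob_forbidden_le hV) _.
  by rewrite ler_wpM2r ?(eta_inv_sum_ge0 game).
rewrite -(@ler_pM2l _ 2) ?ltr0n // (frobdot_FFlam_real hE hF hlam).
apply: le_trans (lerD (lerD (lerD probb Xb) Yb) Wa) _.
rewrite -subr_ge0 (_ : _ - _ = (defect_const A eta + 1) * t); last first.
  by rewrite /orth_const; ring.
by rewrite mulr_ge0 ?addr_ge0 ?ler01 ?(ltW t_gt0).
Qed.

Lemma eps_representation_F :
  eps_representation V (rho_norm lam) F (game_const A eta * 4.-root eps).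
Proof.
set r := 4.-root eps.
have r_ge0 : 0 <= r by rewrite rootC_ge0 // ltW.
have Cr_ge0 : 0 <= game_const A eta * r by rewrite mulr_ge0 // ltW // (game_const_gt0 game).
have exact_rel M : M = 0 -> rho_norm lam M <= game_const A eta * r.
  by move=> ->; rewrite /rho_norm /frob mul0mx -/(frobdot _ _) frobdot0 sqrtC0.
have sqrt_sqrt_eps : sqrtC (sqrtC eps) = r.
  have -> : eps = (r ^+ 2) ^+ 2 by rewrite -exprM rootCK.
  by rewrite !sqrCK ?exprn_ge0.
split; [|split; [|split]].
- by move=> i a; apply: exact_rel; rewrite (F_idem hF) subrr.
- by move=> i a; apply: exact_rel; rewrite (F_herm hF) subrr.
- by move=> i; apply: exact_rel; rewrite (F_sum hF) subrr.
move=> i j a b hV.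
have sqrt_eps_ge0 : 0 <= sqrtC eps by rewrite sqrtC_ge0 ltW.
have K2_ge0 := ltW (orth_const_gt0 game).
apply: le_trans (_ : _ <= sqrtC (orth_const A eta * sqrtC eps)) _.
  rewrite /rho_norm /frob ler_sqrtC ?nnegrE ?mulr_ge0 ?frobdot_ge0 //.
  exact: frobdot_FFlam_forbidden_le.
rewrite sqrtCM ?nnegrE // sqrt_sqrt_eps ler_wpM2r // lerDr sqrtC_ge0.
exact: (defect_const_ge0 game).
Qed.

End NearlyPerfect.

Theorem mainTheorem8 (R : realType) (I A : finType)
    (eta : I -> I -> R[i]) (V : A -> A -> I -> I -> bool) :
  synchronous_game eta V ->
  exists Cst : R[i], 0 < Cst /\
    forall (eps : R[i]), 0 < eps -> eps <= 1 ->
    forall (n : nat) (E F : I -> A -> 'M[R[i]]_n) (lam : 'M[R[i]]_n),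
      quantum_strategy E F lam ->
      eps_perfect eta V E F lam eps ->
      eps_representation V (rho_norm lam) F (Cst * 4.-root eps) /\
      (sync_strategy E F ->
        forall i a, frob (F i a *m lam - lam *m F i a) <= Cst * sqrtC eps).
Proof.
move=> game; exists (game_const A eta); split; first exact: (game_const_gt0 game).
move=> eps eps_gt0 eps_le1 n E F lam [hE [hF [[hlam _] htr]]] perfect.
split; first exact: (eps_representation_F game hE hF hlam htr eps_gt0 eps_le1 perfect).
exact: (sync_commutator_le game hE hF hlam htr eps_gt0 perfect).
Qed.
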